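(* Let $p$ be a probability rule for unnormalised quantum many-worlds theory satisfying Axioms (A1)–(A3). Then for every allowed state $v=\sum_n v_n\lvert n\rangle$ and every $n\ge0$, $p_n(v)=\dfrac{|v_n|^2}{\sum_m|v_m|^2}$.
   Context: Unnormalised quantum many-worlds theory is defined as follows. The worlds are the vectors $\lvert n\rangle$, $n\in\{0,1,2,\dots\}$, of a countably infinite orthonormal basis of a complex Hilbert space. The allowed states are the vectors $v=\sum_n v_n\lvert n\rangle$ with $0<\sum_n|v_n|^2<\infty$, where $v_n=\langle n\vert v\rangle$ is the amplitude of world $n$. The allowed transformations are all unitary operators $T$, with matrix elements $T_{ij}=\langle i\rvert T\lvert j\rangle$. A probability rule assigns to each allowed state $v$ a sequence $(p_n(v))_{n\ge 0}$ of nonnegative reals with $\sum_n p_n(v)=1$. The axioms are: (A1) Present state dependence: $p_n$ depends only on the present state $v$, so $p$ is a function of the state alone. (A2) Weak connection with amplitudes: for every allowed state $v$, $v_n=0$ implies $p_n(v)=0$. (A3) Weak connection with transformations: for every allowed state $v$ and allowed transformation $T$, and every partition of $\{0,1,2,\dots\}$ into subsets $\mathcal S_k$ such that $T_{ij}=0$ whenever $i$ and $j$ lie in different subsets, we have $\sum_{n\in\mathcal S_k}p_n(v)=\sum_{n\in\mathcal S_k}p_n(Tv)$ for every $k$. *)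

From Stdlib Require Import Reals.
From Coquelicot Require Export Coquelicot.
Open Scope R_scope.

(* A vector of the Hilbert space is given by its amplitude sequence v_n = <n|v>. *)
Definition vec := nat -> C.

Definition sqn (v : vec) (n : nat) : R := (Cmod (v n)) ^ 2.

Definition l2 (v : vec) : Prop := ex_series (sqn v).

Definition allowed (v : vec) : Prop := l2 v /\ 0 < Series (sqn v).

Definition basis (j : nat) : vec := fun n => if Nat.eqb n j then 1%C else 0%C.

(* unitary operator on l^2: linear, isometric, surjective (a linear surjective
   isometry of a Hilbert space is exactly a unitary operator). Only its
   behaviour on l^2 matters. *)
Definition unitary (T : vec -> vec) : Prop :=
  (forall u, l2 u -> l2 (T u)) /\
  (forall (u w : vec) (a b : C), l2 u -> l2 w ->
     forall n, T (fun m => (a * u m + b * w m)%C) n = (a * T u n + b * T w n)%C) /\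
  (forall u, l2 u -> Series (sqn (T u)) = Series (sqn u)) /\
  (forall w, l2 w -> exists u, l2 u /\ forall n, T u n = w n).

Definition mat (T : vec -> vec) (i j : nat) : C := T (basis j) i.

(* A probability rule: p v n = p_n(v); for every allowed v, (p_n(v))_n is a
   sequence of nonnegative reals summing to 1. Axiom A1 (dependence on the
   present state only) is built into the type of p. *)
Definition prob_rule (p : vec -> nat -> R) : Prop :=
  forall v, allowed v -> (forall n, 0 <= p v n) /\ is_series (p v) 1.

Definition axiom_A2 (p : vec -> nat -> R) : Prop :=
  forall v n, allowed v -> v n = 0%C -> p v n = 0.

Definition block_sum (p : vec -> nat -> R) (v : vec) (blk : nat -> nat) (k : nat) : R :=
  Series (fun n => if Nat.eqb (blk n) k then p v n else 0).

(* A3: a partition of N (necessarily into countably many blocks) is encoded by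
   a labelling blk : nat -> nat, S_k = blk^{-1}(k). *)
Definition axiom_A3 (p : vec -> nat -> R) : Prop :=
  forall (v : vec) (T : vec -> vec) (blk : nat -> nat),
    allowed v -> unitary T ->
    (forall i j, blk i <> blk j -> mat T i j = 0%C) ->
    forall k, block_sum p v blk k = block_sum p (T v) blk k.

(* Let p satisfy A1-A3, let v be an allowed state of total weight
   N = sum_k |v_k|^2, and fix a world n.
   1. Multiplication by phases is a diagonal unitary, so A3 for the partition
      {n} | rest gives p_n(v) = p_n(|v|), where |v| has entries |v_k|.
   2. A Householder reflection along a real vector u with u_n = 0 does not
      connect world n with any other world; for a suitable u it maps |v| to the
      two-level state |v_n| |n> + sqrt(N - |v_n|^2) |n+1>.  Hence
      p_n(v) = G_n(N, |v_n|^2), where G_n(N, a) is p_n of the two-level state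
      sqrt(a) |n> + sqrt(N - a) |n+1>.
   3. Rotations in a plane span{|k>, |j>} of three-level states, together with
      A3 for the block {k, j} and A2, show that G_n(N, -) does not depend on n
      and is additive on [0, N]; normalisation and A2 give G_n(N, N) = 1.
   4. A nonnegative additive function on [0, N] taking the value 1 at N is
      a |-> a / N (Cauchy's functional equation), which yields the Born rule. *)

From Stdlib Require Import Reals Lra Lia FunctionalExtensionality.
From Coquelicot Require Import Coquelicot.
Open Scope R_scope.

Lemma is_series_Req (a b : nat -> R) (l l' : R) :
  (forall n, a n = b n) -> l = l' -> is_series a l -> is_series b l'.
Proof. intros Hab <-. exact (is_series_ext a b l Hab). Qed.

Lemma is_series_zero : is_series (fun _ : nat => 0) 0.
Proof.
  apply (filterlim_ext (fun _ => 0)); [|apply filterlim_const].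
  intro n. rewrite sum_n_const. ring.
Qed.

Definition spike (k : nat) (a : R) : nat -> R := fun i => if Nat.eqb i k then a else 0.

Lemma is_series_spike k a : is_series (spike k a) a.
Proof.
  revert a; induction k as [|k IHk]; intro a; apply is_series_decr_1.
  - apply (is_series_Req (fun _ => 0) _ 0); [reflexivity| |exact is_series_zero].
    unfold spike, plus, opp; simpl. change (0 = a + - a). ring.
  - apply (is_series_Req (spike k a) _ a); [reflexivity| |exact (IHk a)].
    unfold spike, plus, opp; simpl. change (a = a + - 0). ring.
Qed.

Lemma Series_spike k a : Series (spike k a) = a.
Proof. apply is_series_unique, is_series_spike. Qed.

Lemma ex_series_spike k a : ex_series (spike k a).
Proof. exists a. apply is_series_spike. Qed.

Lemma Series_zero : Series (fun _ => 0) = 0.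
Proof. apply is_series_unique, is_series_zero. Qed.

(* These
   real-valued instances of Coquelicot's lemmas (stated for normed modules) form
   the hint database [series] that discharges summability side goals. *)
Lemma ex_series_Rplus (a b : nat -> R) :
  ex_series a -> ex_series b -> ex_series (fun n => a n + b n).
Proof. exact (ex_series_plus a b). Qed.

Lemma ex_series_Rscal (c : R) (a : nat -> R) : ex_series a -> ex_series (fun n => c * a n).
Proof. exact (ex_series_scal_l c a). Qed.

Lemma ex_series_Rminus (a b : nat -> R) :
  ex_series a -> ex_series b -> ex_series (fun n => a n - b n).
Proof. exact (ex_series_minus a b). Qed.

Lemma ex_series_Rext (a b : nat -> R) :
  (forall n, a n = b n) -> ex_series a -> ex_series b.
Proof. exact (ex_series_ext a b). Qed.

Create HintDb series.
#[local] Hint Resolve ex_series_Rplus ex_series_Rscal ex_series_Rminus ex_series_spike : series.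

Lemma ex_series_dominated (a b : nat -> R) :
  (forall n, Rabs (a n) <= b n) -> ex_series b -> ex_series a.
Proof. exact (ex_series_le a b). Qed.

Lemma ex_series_product (a b : nat -> R) :
  ex_series (fun n => a n ^ 2) -> ex_series (fun n => b n ^ 2) ->
  ex_series (fun n => a n * b n).
Proof.
  intros Ha Hb. apply (ex_series_dominated _ (fun n => / 2 * (a n ^ 2 + b n ^ 2)));
    [|auto with series].
  intro n. apply Rabs_le. pose proof (pow2_ge_0 (a n - b n)). pose proof (pow2_ge_0 (a n + b n)).
  split; nra.
Qed.

Lemma Series_nonneg (a : nat -> R) : (forall n, 0 <= a n) -> ex_series a -> 0 <= Series a.
Proof.
  intros Hpos Ha. rewrite <- Series_zero. apply Series_le; [|exact Ha].
  intro n. split; [lra|apply Hpos].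
Qed.

Lemma term_le_Series (a : nat -> R) k : (forall n, 0 <= a n) -> ex_series a -> a k <= Series a.
Proof.
  intros Hpos Ha. rewrite <- (Series_spike k (a k)). apply Series_le; [|exact Ha].
  intro n. unfold spike. destruct (Nat.eqb_spec n k) as [->|_]; split; auto with real.
Qed.

Lemma sqn_re_im (x : vec) k : sqn x k = fst (x k) ^ 2 + snd (x k) ^ 2.
Proof. unfold sqn, Cmod. rewrite pow2_sqrt; [reflexivity|]. nra. Qed.

Lemma sqn_nonneg (x : vec) k : 0 <= sqn x k.
Proof. rewrite sqn_re_im. nra. Qed.

Lemma Cmod_RtoC_sqr (x : R) : Cmod (RtoC x) ^ 2 = x ^ 2.
Proof. rewrite Cmod_R. apply pow2_abs. Qed.

Lemma l2_re (x : vec) : l2 x -> ex_series (fun k => fst (x k) ^ 2).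
Proof.
  intro Hx. apply (ex_series_dominated _ (sqn x)); [|exact Hx].
  intro k. rewrite sqn_re_im, Rabs_pos_eq; nra.
Qed.

Lemma l2_im (x : vec) : l2 x -> ex_series (fun k => snd (x k) ^ 2).
Proof.
  intro Hx. apply (ex_series_dominated _ (sqn x)); [|exact Hx].
  intro k. rewrite sqn_re_im, Rabs_pos_eq; nra.
Qed.

Definition realvec (r : nat -> R) : vec := fun k => RtoC (r k).

Lemma l2_add (x y : vec) : l2 x -> l2 y -> l2 (fun k => (x k + y k)%C).
Proof.
  intros Hx Hy. apply (ex_series_dominated _ (fun k => 2 * sqn x k + 2 * sqn y k));
    [|auto with series].
  intro k. rewrite Rabs_pos_eq by apply sqn_nonneg. rewrite !sqn_re_im. simpl.
  pose proof (pow2_ge_0 (fst (x k) - fst (y k))). pose proof (pow2_ge_0 (snd (x k) - snd (y k))).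
  nra.
Qed.

Lemma l2_scal (c : C) (x : vec) : l2 x -> l2 (fun k => (c * x k)%C).
Proof.
  intro Hx. apply (ex_series_Rext (fun k => Cmod c ^ 2 * sqn x k)); [|auto with series].
  intro k. unfold sqn. rewrite Cmod_mult. ring.
Qed.

Lemma l2_realvec (r : nat -> R) : ex_series (fun k => r k ^ 2) -> l2 (realvec r).
Proof.
  intro Hr. apply (ex_series_Rext (fun k => r k ^ 2)); [|exact Hr].
  intro k. unfold sqn, realvec. rewrite Cmod_RtoC_sqr. reflexivity.
Qed.

Lemma sqn_realvec (r : nat -> R) : sqn (realvec r) = fun k => r k ^ 2.
Proof. apply functional_extensionality. intro k. apply Cmod_RtoC_sqr. Qed.

(* Axiom A3 for the partition {n} | N \ {n}: a unitary that does not connect world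
   n with any other world leaves p_n unchanged. *)
Definition isolate (n : nat) : nat -> nat := fun i => if Nat.eqb i n then 0%nat else 1%nat.

Lemma block_sum_isolate p v n : block_sum p v (isolate n) 0 = p v n.
Proof.
  unfold block_sum. rewrite <- (Series_spike n (p v n)). apply Series_ext. intro k.
  unfold spike, isolate. destruct (Nat.eqb_spec k n) as [->|_]; reflexivity.
Qed.

Lemma A3_isolated p v T n : axiom_A3 p -> allowed v -> unitary T ->
  (forall i j, i <> j -> (i = n \/ j = n) -> mat T i j = 0%C) -> p v n = p (T v) n.
Proof.
  intros HA3 Hv HT Hmat. rewrite <- !block_sum_isolate. apply HA3; [exact Hv|exact HT|].
  intros i j Hij. apply Hmat; unfold isolate in Hij.
  - intros ->. exact (Hij eq_refl).
  - destruct (Nat.eqb_spec i n), (Nat.eqb_spec j n); auto. contradiction.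
Qed.

(* Axiom A3 for the partition into the block {i, j} and singletons: a unitary
   acting only inside span{|i>, |j>} preserves p_i + p_j. *)
Definition merge (i j : nat) : nat -> nat := fun a => if Nat.eqb a j then i else a.

Lemma block_sum_merge p v i j : i <> j -> block_sum p v (merge i j) i = p v i + p v j.
Proof.
  intro Hij. unfold block_sum.
  rewrite <- (Series_spike i (p v i)), <- (Series_spike j (p v j)), <- Series_plus
    by apply ex_series_spike.
  apply Series_ext. intro k. unfold spike, merge.
  destruct (Nat.eqb_spec k j), (Nat.eqb_spec k i); subst;
    rewrite ?Nat.eqb_refl; try contradiction; ring.
Qed.

Lemma A3_pair p v T i j : axiom_A3 p -> i <> j -> allowed v -> unitary T ->
  (forall a b, merge i j a <> merge i j b -> mat T a b = 0%C) ->
  p v i + p v j = p (T v) i + p (T v) j.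
Proof.
  intros HA3 Hij Hv HT Hmat. rewrite <- !block_sum_merge by exact Hij.
  exact (HA3 _ _ _ Hv HT Hmat i).
Qed.

Definition phase (ph : nat -> C) (x : vec) : vec := fun k => (ph k * x k)%C.

Section Phase.
Variable ph : nat -> C.
Hypothesis ph_unimodular : forall k, Cmod (ph k) = 1.

Lemma sqn_phase x : sqn (phase ph x) = sqn x.
Proof.
  apply functional_extensionality. intro k. unfold sqn, phase.
  rewrite Cmod_mult, ph_unimodular. ring.
Qed.

Lemma phase_unitary : unitary (phase ph).
Proof.
  repeat split.
  - intros u Hu. unfold l2. rewrite sqn_phase. exact Hu.
  - intros u w a b _ _ k. unfold phase. ring.
  - intros u _. rewrite sqn_phase. reflexivity.
  - intros w Hw. exists (phase (fun k => Cconj (ph k)) w). split.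
    + unfold l2. apply (ex_series_Rext (sqn w)); [|exact Hw].
      intro k. unfold sqn, phase. rewrite Cmod_mult, Cmod_conj, ph_unimodular, Rmult_1_l.
      reflexivity.
    + intro k. unfold phase.
      rewrite Cmult_assoc, <- Cmod2_conj, ph_unimodular, pow1. apply Cmult_1_l.
Qed.

End Phase.

Lemma phase_mat ph i j : i <> j -> mat (phase ph) i j = 0%C.
Proof.
  intro Hij. unfold mat, phase, basis. destruct (Nat.eqb_spec i j); [contradiction|]. ring.
Qed.

(* By a diagonal phase change, p_n(v) only depends on the moduli |v_k|. *)
Lemma phase_invariance p v n : axiom_A3 p -> allowed v ->
  p v n = p (realvec (fun k => Cmod (v k))) n.
Proof.
  intros HA3 Hv.
  set (ph := fun k => match Req_EM_T (Cmod (v k)) 0 return C with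
               | left _ => RtoC 1 | right _ => (Cconj (v k) / RtoC (Cmod (v k)))%C end).
  assert (Hnz : forall k, Cmod (v k) <> 0 -> RtoC (Cmod (v k)) <> 0%C)
    by (intros k Hk E; apply Hk; injection E; auto).
  assert (Hph : forall k, Cmod (ph k) = 1).
  { intro k. unfold ph. destruct (Req_EM_T (Cmod (v k)) 0) as [_|Hk].
    - rewrite Cmod_R. apply Rabs_R1.
    - rewrite Cmod_div by exact (Hnz k Hk).
      rewrite Cmod_conj, Cmod_R, Rabs_pos_eq by apply Cmod_ge_0.
      field. exact Hk. }
  assert (Hv' : phase ph v = realvec (fun k => Cmod (v k))).
  { apply functional_extensionality. intro k. unfold phase, realvec, ph.
    destruct (Req_EM_T (Cmod (v k)) 0) as [Hk|Hk].
    - rewrite Hk, (Cmod_eq_0 _ Hk). ring.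
    - transitivity ((v k * Cconj (v k)) / RtoC (Cmod (v k)))%C; [field; exact (Hnz k Hk)|].
      rewrite <- Cmod2_conj, RtoC_pow. field. exact (Hnz k Hk). }
  rewrite <- Hv'. apply A3_isolated; auto using phase_unitary.
  intros i j Hij _. exact (phase_mat ph i j Hij).
Qed.

Section Householder.
Variable u : nat -> R.
Hypothesis u_l2 : ex_series (fun k => u k ^ 2).
Let U := Series (fun k => u k ^ 2).
Hypothesis U_neq0 : U <> 0.

Definition inner_re (x : vec) : R := Series (fun k => u k * fst (x k)).
Definition inner_im (x : vec) : R := Series (fun k => u k * snd (x k)).
Definition inner (x : vec) : C := (inner_re x, inner_im x).

Definition householder (x : vec) : vec := fun k => (x k - RtoC (2 / U * u k) * inner x)%C.

Lemma ex_series_inner_re x : l2 x -> ex_series (fun k => u k * fst (x k)).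
Proof. intro Hx. exact (ex_series_product _ _ u_l2 (l2_re x Hx)). Qed.

Lemma ex_series_inner_im x : l2 x -> ex_series (fun k => u k * snd (x k)).
Proof. intro Hx. exact (ex_series_product _ _ u_l2 (l2_im x Hx)). Qed.

#[local] Hint Resolve ex_series_inner_re ex_series_inner_im : series.

Lemma inner_linear (x y : vec) (a b : C) : l2 x -> l2 y ->
  inner (fun k => (a * x k + b * y k)%C) = (a * inner x + b * inner y)%C.
Proof.
  intros Hx Hy. apply injective_projections; simpl; unfold inner_re, inner_im.
  - transitivity (Series (fun k => (fst a * (u k * fst (x k)) - snd a * (u k * snd (x k)))
                              + (fst b * (u k * fst (y k)) - snd b * (u k * snd (y k))))).
    { apply Series_ext. intro k. simpl. ring. }
    rewrite Series_plus, !Series_minus, !Series_scal_l by auto with series. ring.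
  - transitivity (Series (fun k => (fst a * (u k * snd (x k)) + snd a * (u k * fst (x k)))
                              + (fst b * (u k * snd (y k)) + snd b * (u k * fst (y k))))).
    { apply Series_ext. intro k. simpl. ring. }
    rewrite !Series_plus, !Series_scal_l by auto with series. ring.
Qed.

Lemma householder_l2 x : l2 x -> l2 (householder x).
Proof.
  intro Hx.
  replace (householder x) with (fun k => (x k + - inner x * RtoC (2 / U) * realvec u k)%C)
    by (apply functional_extensionality; intro k; unfold householder, realvec;
        rewrite RtoC_mult; ring).
  apply l2_add; [exact Hx|]. apply l2_scal, l2_realvec, u_l2.
Qed.

Lemma householder_norm x : l2 x -> Series (sqn (householder x)) = Series (sqn x).
Proof.
  intro Hx. set (cr := 2 / U * inner_re x). set (ci := 2 / U * inner_im x).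
  transitivity (Series (fun k => sqn x k - 2 * cr * (u k * fst (x k))
                                 - 2 * ci * (u k * snd (x k)) + (cr ^ 2 + ci ^ 2) * u k ^ 2)).
  { apply Series_ext. intro k. rewrite !sqn_re_im. unfold householder, inner, cr, ci. simpl. ring. }
  rewrite Series_plus, !Series_minus, !Series_scal_l by auto with series.
  fold (inner_re x) (inner_im x) U. unfold cr, ci. field. exact U_neq0.
Qed.

Lemma inner_householder x : l2 x -> inner (householder x) = (- inner x)%C.
Proof.
  intro Hx. apply injective_projections; simpl; unfold inner_re, inner_im.
  - transitivity (Series (fun k => u k * fst (x k) - 2 / U * inner_re x * u k ^ 2)).
    { apply Series_ext. intro k. unfold householder. simpl. ring. }
    rewrite Series_minus, Series_scal_l by auto with series.
    fold (inner_re x) U. field. exact U_neq0.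
  - transitivity (Series (fun k => u k * snd (x k) - 2 / U * inner_im x * u k ^ 2)).
    { apply Series_ext. intro k. unfold householder. simpl. ring. }
    rewrite Series_minus, Series_scal_l by auto with series.
    fold (inner_im x) U. field. exact U_neq0.
Qed.

Lemma householder_involutive x : l2 x -> forall k, householder (householder x) k = x k.
Proof.
  intros Hx k. unfold householder at 1. rewrite inner_householder by exact Hx.
  unfold householder. ring.
Qed.

Lemma householder_unitary : unitary householder.
Proof.
  repeat split.
  - exact householder_l2.
  - intros x y a b Hx Hy k. unfold householder. rewrite inner_linear by assumption. ring.
  - exact householder_norm.
  - intros w Hw. exists (householder w).
    split; [exact (householder_l2 w Hw)|exact (householder_involutive w Hw)].
Qed.

Lemma inner_basis j : inner (basis j) = RtoC (u j).
Proof.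
  apply injective_projections; simpl; unfold inner_re, inner_im.
  - rewrite <- (Series_spike j (u j)). apply Series_ext. intro k.
    unfold basis, spike. destruct (Nat.eqb_spec k j) as [->|_]; simpl; ring.
  - rewrite <- Series_zero. apply Series_ext. intro k.
    unfold basis. destruct (Nat.eqb k j); simpl; ring.
Qed.

Lemma householder_mat n : u n = 0 ->
  forall i j, i <> j -> (i = n \/ j = n) -> mat householder i j = 0%C.
Proof.
  intros Hn i j Hij Hi_or_j. unfold mat, householder. rewrite inner_basis.
  unfold basis. destruct (Nat.eqb_spec i j) as [|_]; [contradiction|].
  destruct Hi_or_j as [->| ->]; rewrite Hn; apply injective_projections; simpl; ring.
Qed.

End Householder.

Definition two (n m : nat) (a b : R) : vec :=
  fun k => if Nat.eqb k n then RtoC a else if Nat.eqb k m then RtoC b else 0%C.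

(* A real state r is mapped, by a Householder reflection along a vector u with
   u_n = 0, to the two-level state r_n|n> + W|m>, where W is the norm of the
   component of r orthogonal to |n>. *)
Section TwoLevel.
Variables (r : nat -> R) (n m : nat).
Hypothesis r_l2 : ex_series (fun k => r k ^ 2).
Hypothesis m_neq_n : m <> n.

Let w (k : nat) : R := if Nat.eqb k n then 0 else r k.
Let W : R := sqrt (Series (fun k => w k ^ 2)).
Let u (k : nat) : R := w k - spike m W k.

Lemma w_sqr k : w k ^ 2 = r k ^ 2 - spike n (r n ^ 2) k.
Proof. unfold w, spike. destruct (Nat.eqb_spec k n) as [->|_]; ring. Qed.

Lemma ex_series_w : ex_series (fun k => w k ^ 2).
Proof. apply (ex_series_Rext _ _ (fun k => eq_sym (w_sqr k))). auto with series. Qed.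

Lemma Series_w : Series (fun k => w k ^ 2) = Series (fun k => r k ^ 2) - r n ^ 2.
Proof.
  rewrite (Series_ext _ _ w_sqr), Series_minus, Series_spike by auto with series.
  reflexivity.
Qed.

Lemma W_sqr : W ^ 2 = Series (fun k => w k ^ 2).
Proof.
  apply pow2_sqrt, Series_nonneg; [intro; apply pow2_ge_0|exact ex_series_w].
Qed.

Lemma u_sqr k : u k ^ 2 = w k ^ 2 + spike m ((w m - W) ^ 2 - w m ^ 2) k.
Proof. unfold u, spike. destruct (Nat.eqb_spec k m) as [->|_]; ring. Qed.

Lemma ex_series_u : ex_series (fun k => u k ^ 2).
Proof.
  pose proof ex_series_w. apply (ex_series_Rext _ _ (fun k => eq_sym (u_sqr k))).
  auto with series.
Qed.

Lemma Series_u : Series (fun k => u k ^ 2) = 2 * (W ^ 2 - W * w m).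
Proof.
  rewrite (Series_ext _ _ u_sqr), Series_plus, Series_spike, <- W_sqr
    by auto using ex_series_w with series.
  ring.
Qed.

Lemma u_n : u n = 0.
Proof.
  unfold u, w, spike. rewrite Nat.eqb_refl.
  destruct (Nat.eqb_spec n m); [congruence|ring].
Qed.

Lemma inner_u_r : inner u (realvec r) = RtoC (W ^ 2 - W * w m).
Proof.
  assert (Hterm : forall k, u k * r k = w k ^ 2 - spike m (W * w m) k).
  { intro k. destruct (Nat.eqb_spec k n) as [->|Hk].
    - rewrite u_n. unfold w, spike. rewrite Nat.eqb_refl.
      destruct (Nat.eqb_spec n m); [congruence|ring].
    - unfold u, w, spike. destruct (Nat.eqb_spec k n); [contradiction|].
      destruct (Nat.eqb_spec k m) as [->|_]; [|ring].
      destruct (Nat.eqb_spec m n); [contradiction|ring]. }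
  apply injective_projections; simpl; unfold inner_re, inner_im, realvec; simpl.
  - rewrite (Series_ext _ _ Hterm), Series_minus, Series_spike, <- W_sqr
      by auto using ex_series_w with series.
    reflexivity.
  - rewrite (Series_ext _ (fun _ => 0)) by (intro; ring). exact Series_zero.
Qed.

(* the reflection is trivial when u = 0: r is already two-level *)
Lemma two_level_fixed : Series (fun k => u k ^ 2) = 0 -> realvec r = two n m (r n) W.
Proof.
  intro HU.
  assert (Hu : forall k, u k = 0).
  { intro k. assert (Hk : u k ^ 2 <= 0).
    { rewrite <- HU. apply (term_le_Series (fun i => u i ^ 2));
        [intro; apply pow2_ge_0|exact ex_series_u]. }
    nra. }
  apply functional_extensionality. intro k. unfold realvec, two.
  destruct (Nat.eqb_spec k n) as [->|Hkn]; [reflexivity|].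
  specialize (Hu k). unfold u, w, spike in Hu.
  destruct (Nat.eqb_spec k n); [contradiction|].
  destruct (Nat.eqb_spec k m); f_equal; lra.
Qed.

Lemma two_level_reflected :
  Series (fun k => u k ^ 2) <> 0 -> householder u (realvec r) = two n m (r n) W.
Proof.
  intro HU.
  assert (Hcoef : (RtoC (2 / Series (fun k => u k ^ 2))%R * inner u (realvec r))%C = 1%C).
  { rewrite inner_u_r, <- RtoC_mult. f_equal. rewrite Series_u in HU |- *. field. lra. }
  apply functional_extensionality. intro k. unfold householder.
  rewrite RtoC_mult, <- Cmult_assoc, (Cmult_comm (RtoC (u k))), Cmult_assoc, Hcoef.
  unfold realvec, two.
  destruct (Nat.eqb_spec k n) as [->|Hkn]; [rewrite u_n; ring|].
  unfold u, w, spike. destruct (Nat.eqb_spec k n); [contradiction|].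
  destruct (Nat.eqb_spec k m); rewrite RtoC_minus; ring.
Qed.

Lemma two_level_transform : exists T, unitary T /\
  (forall i j, i <> j -> (i = n \/ j = n) -> mat T i j = 0%C) /\
  T (realvec r) = two n m (r n) W.
Proof.
  destruct (Req_EM_T (Series (fun k => u k ^ 2)) 0) as [HU|HU].
  - (* u = 0: take the identity, written as the trivial phase change *)
    exists (phase (fun _ => 1%C)). split; [|split].
    + apply phase_unitary. intros _. exact Cmod_1.
    + intros i j Hij _. exact (phase_mat _ i j Hij).
    + rewrite <- two_level_fixed by exact HU.
      apply functional_extensionality. intro k. apply Cmult_1_l.
  - exists (householder u). split; [|split].
    + exact (householder_unitary u ex_series_u HU).
    + exact (householder_mat u n u_n).
    + exact (two_level_reflected HU).
Qed.

End TwoLevel.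

(* A3 for the partition {n} | rest, applied to the transformation above. *)
Lemma two_level_reduction p r n m : axiom_A3 p -> allowed (realvec r) -> m <> n ->
  p (realvec r) n = p (two n m (r n) (sqrt (Series (fun k => r k ^ 2) - r n ^ 2))) n.
Proof.
  intros HA3 Hr Hmn.
  assert (r_l2 : ex_series (fun k => r k ^ 2)) by (rewrite <- sqn_realvec; apply Hr).
  destruct (two_level_transform r n m r_l2 Hmn) as (T & HT & Hmat & HTr).
  rewrite Series_w in HTr by exact r_l2.
  rewrite <- HTr. exact (A3_isolated p _ T n HA3 Hr HT Hmat).
Qed.

Definition G (p : vec -> nat -> R) (n : nat) (N a : R) : R :=
  p (two n (S n) (sqrt a) (sqrt (N - a))) n.

Lemma reduction_to_G p v n : axiom_A3 p -> allowed v ->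
  p v n = G p n (Series (sqn v)) (sqn v n).
Proof.
  intros HA3 Hv. rewrite (phase_invariance p v n HA3 Hv).
  assert (Hsqn : sqn (realvec (fun k => Cmod (v k))) = sqn v) by apply sqn_realvec.
  assert (Hr : allowed (realvec (fun k => Cmod (v k))))
    by (unfold allowed, l2; rewrite Hsqn; exact Hv).
  rewrite (two_level_reduction p _ n (S n) HA3 Hr (Nat.neq_succ_diag_l n)).
  unfold G, sqn. rewrite sqrt_pow2 by apply Cmod_ge_0. reflexivity.
Qed.

Definition three (a b c : nat) (x y z : R) : vec :=
  fun k => if Nat.eqb k a then RtoC x else if Nat.eqb k b then RtoC y
           else if Nat.eqb k c then RtoC z else 0%C.

Section ThreeLevel.
Variables (a b c : nat).
Hypotheses (a_neq_b : a <> b) (a_neq_c : a <> c) (b_neq_c : b <> c).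

Lemma sqn_three x y z k :
  sqn (three a b c x y z) k = spike a (x ^ 2) k + spike b (y ^ 2) k + spike c (z ^ 2) k.
Proof.
  unfold sqn, three, spike.
  destruct (Nat.eqb_spec k a), (Nat.eqb_spec k b), (Nat.eqb_spec k c); subst;
    try contradiction; rewrite ?Cmod_RtoC_sqr, ?Cmod_0; ring.
Qed.

Lemma l2_three x y z : l2 (three a b c x y z).
Proof. apply (ex_series_Rext _ _ (fun k => eq_sym (sqn_three x y z k))). auto with series. Qed.

Lemma Series_sqn_three x y z : Series (sqn (three a b c x y z)) = x ^ 2 + y ^ 2 + z ^ 2.
Proof.
  rewrite (Series_ext _ _ (sqn_three x y z)), !Series_plus, !Series_spike by auto with series.
  reflexivity.
Qed.

Lemma allowed_three x y z : 0 < x ^ 2 + y ^ 2 + z ^ 2 -> allowed (three a b c x y z).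
Proof. intro Hpos. split; [apply l2_three|]. rewrite Series_sqn_three. exact Hpos. Qed.

Lemma three_a x y z : three a b c x y z a = RtoC x.
Proof. unfold three. rewrite Nat.eqb_refl. reflexivity. Qed.

Lemma three_b x y z : three a b c x y z b = RtoC y.
Proof.
  unfold three. destruct (Nat.eqb_spec b a); [congruence|]. rewrite Nat.eqb_refl. reflexivity.
Qed.

End ThreeLevel.

Lemma two_three n m x y : n <> m -> two n m x y = three n m (n + m + 1) x y 0.
Proof.
  intro Hnm. apply functional_extensionality. intro k. unfold two, three.
  destruct (Nat.eqb_spec k n), (Nat.eqb_spec k m), (Nat.eqb_spec k (n + m + 1)); subst;
    try lia; reflexivity.
Qed.

Definition rot (i j : nat) (al be : R) (x : vec) : vec :=
  fun k => if Nat.eqb k i then (RtoC al * x i + RtoC be * x j)%C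
           else if Nat.eqb k j then (RtoC (- be) * x i + RtoC al * x j)%C else x k.

Section RotationEntries.
Variables (i j : nat) (al be : R).
Hypothesis i_neq_j : i <> j.

Lemma rot_at_i x : rot i j al be x i = (RtoC al * x i + RtoC be * x j)%C.
Proof. unfold rot. rewrite Nat.eqb_refl. reflexivity. Qed.

Lemma rot_at_j x : rot i j al be x j = (RtoC (- be) * x i + RtoC al * x j)%C.
Proof.
  unfold rot. destruct (Nat.eqb_spec j i); [congruence|]. rewrite Nat.eqb_refl. reflexivity.
Qed.

Lemma rot_elsewhere x k : k <> i -> k <> j -> rot i j al be x k = x k.
Proof.
  intros Hki Hkj. unfold rot.
  destruct (Nat.eqb_spec k i), (Nat.eqb_spec k j); [contradiction..|reflexivity].
Qed.

Lemma rot_mat : forall a b, merge i j a <> merge i j b -> mat (rot i j al be) a b = 0%C.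
Proof.
  intros a b Hab. unfold merge in Hab. unfold mat, rot, basis.
  destruct (Nat.eqb_spec a i), (Nat.eqb_spec a j), (Nat.eqb_spec b j), (Nat.eqb_spec i b),
    (Nat.eqb_spec j b), (Nat.eqb_spec a b); try lia; ring.
Qed.

Lemma rot_three c x y z : i <> c -> j <> c ->
  rot i j al be (three i j c x y z) = three i j c (al * x + be * y) (- be * x + al * y) z.
Proof.
  intros Hic Hjc. apply functional_extensionality. intro k. unfold rot.
  rewrite three_a, three_b by assumption. unfold three.
  destruct (Nat.eqb_spec k i), (Nat.eqb_spec k j); subst; try contradiction; try reflexivity;
    apply injective_projections; simpl; ring.
Qed.

End RotationEntries.

Section Rotation.
Variables (i j : nat) (al be : R).
Hypothesis i_neq_j : i <> j.
Hypothesis al_be_unit : al ^ 2 + be ^ 2 = 1.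

Lemma sqn_rot x k : sqn (rot i j al be x) k =
  sqn x k + spike i (sqn (rot i j al be x) i - sqn x i) k
          + spike j (sqn (rot i j al be x) j - sqn x j) k.
Proof.
  unfold spike. destruct (Nat.eqb_spec k i), (Nat.eqb_spec k j); subst; try contradiction; try ring.
  unfold sqn at 1. rewrite rot_elsewhere by assumption. unfold sqn. ring.
Qed.

Lemma sqn_rot_pair x : sqn (rot i j al be x) i + sqn (rot i j al be x) j = sqn x i + sqn x j.
Proof.
  transitivity ((al ^ 2 + be ^ 2) * (sqn x i + sqn x j)); [|rewrite al_be_unit; ring].
  rewrite !sqn_re_im, rot_at_i, rot_at_j by exact i_neq_j. simpl. ring.
Qed.

Lemma rot_l2 x : l2 x -> l2 (rot i j al be x).
Proof. intro Hx. apply (ex_series_Rext _ _ (fun k => eq_sym (sqn_rot x k))). auto with series. Qed.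

Lemma rot_norm x : l2 x -> Series (sqn (rot i j al be x)) = Series (sqn x).
Proof.
  intro Hx. rewrite (Series_ext _ _ (sqn_rot x)), !Series_plus, !Series_spike by auto with series.
  pose proof (sqn_rot_pair x). lra.
Qed.

Lemma rot_inverse w k : rot i j al be (rot i j al (- be) w) k = w k.
Proof.
  destruct (Nat.eqb_spec k i) as [->|Hki]; [|destruct (Nat.eqb_spec k j) as [->|Hkj]].
  - rewrite !rot_at_i, rot_at_j by exact i_neq_j.
    transitivity (RtoC (al ^ 2 + be ^ 2) * w i)%C;
      [rewrite RtoC_plus, !RtoC_pow, !RtoC_opp; ring|rewrite al_be_unit; ring].
  - rewrite !rot_at_j, rot_at_i by exact i_neq_j.
    transitivity (RtoC (al ^ 2 + be ^ 2) * w j)%C;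
      [rewrite RtoC_plus, !RtoC_pow, !RtoC_opp; ring|rewrite al_be_unit; ring].
  - rewrite !rot_elsewhere by assumption. reflexivity.
Qed.

End Rotation.

Lemma rot_unitary i j al be : i <> j -> al ^ 2 + be ^ 2 = 1 -> unitary (rot i j al be).
Proof.
  intros Hij Hunit. repeat split.
  - exact (rot_l2 i j al be Hij).
  - intros x y a b _ _ k. unfold rot. destruct (Nat.eqb k i), (Nat.eqb k j); ring.
  - exact (rot_norm i j al be Hij Hunit).
  - intros w Hw. exists (rot i j al (- be) w). split.
    + exact (rot_l2 i j al (- be) Hij w Hw).
    + exact (rot_inverse i j al be Hij Hunit w).
Qed.

Section RuleOnTwoLevelStates.
Variable p : vec -> nat -> R.
Hypothesis p_rule : prob_rule p.
Hypothesis p_A2 : axiom_A2 p.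
Hypothesis p_A3 : axiom_A3 p.

Lemma allowed_two n N a : 0 < N -> 0 <= a <= N -> allowed (two n (S n) (sqrt a) (sqrt (N - a))).
Proof.
  intros HN Ha. rewrite two_three by lia. apply allowed_three; try lia.
  rewrite !pow2_sqrt by lra. lra.
Qed.

Lemma G_nonneg n N a : 0 < N -> 0 <= a <= N -> 0 <= G p n N a.
Proof. intros HN Ha. apply (p_rule _ (allowed_two n N a HN Ha)). Qed.

Lemma G_zero n N : 0 < N -> G p n N 0 = 0.
Proof.
  intro HN. apply p_A2; [apply allowed_two; lra|].
  unfold two. rewrite Nat.eqb_refl, sqrt_0. reflexivity.
Qed.

(* all the weight on world n: by A2 the other probabilities vanish, so p_n = 1 *)
Lemma G_full n N : 0 < N -> G p n N N = 1.
Proof.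
  intro HN. unfold G. set (x := two n (S n) (sqrt N) (sqrt (N - N))).
  assert (Hx : allowed x) by (apply allowed_two; lra).
  assert (Hsupp : forall k, p x k = spike n (p x n) k).
  { intro k. unfold spike. destruct (Nat.eqb_spec k n) as [->|Hkn]; [reflexivity|].
    apply p_A2; [exact Hx|]. unfold x, two.
    destruct (Nat.eqb_spec k n); [contradiction|].
    replace (N - N) with 0 by ring. rewrite sqrt_0. destruct (Nat.eqb k (S n)); reflexivity. }
  destruct (p_rule x Hx) as [_ Hsum].
  rewrite <- (Series_spike n (p x n)), <- (Series_ext _ _ Hsupp).
  exact (is_series_unique _ _ Hsum).
Qed.

Lemma p_three_G a b c x y z : a <> b -> a <> c -> b <> c -> 0 < x ^ 2 + y ^ 2 + z ^ 2 ->
  p (three a b c x y z) a = G p a (x ^ 2 + y ^ 2 + z ^ 2) (x ^ 2) /\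
  p (three a b c x y z) b = G p b (x ^ 2 + y ^ 2 + z ^ 2) (y ^ 2).
Proof.
  intros Hab Hac Hbc Hpos. pose proof (allowed_three a b c Hab Hac Hbc x y z Hpos) as Hx.
  rewrite !(reduction_to_G p _ _ p_A3 Hx), Series_sqn_three by assumption.
  unfold sqn. rewrite three_a, three_b, !Cmod_RtoC_sqr by assumption. split; reflexivity.
Qed.

(* A3 applied to a rotation in span{|k>, |j>} of a three-level state. *)
Lemma G_rotation k j N x y z al be : k <> j -> al ^ 2 + be ^ 2 = 1 ->
  N = x ^ 2 + y ^ 2 + z ^ 2 -> 0 < N ->
  G p k N (x ^ 2) + G p j N (y ^ 2) =
  G p k N ((al * x + be * y) ^ 2) + G p j N ((- be * x + al * y) ^ 2).
Proof.
  intros Hkj Hunit HN HNpos. set (c := (k + j + 1)%nat).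
  assert (Hkc : k <> c) by lia. assert (Hjc : j <> c) by lia.
  assert (HN' : N = (al * x + be * y) ^ 2 + (- be * x + al * y) ^ 2 + z ^ 2).
  { rewrite HN. transitivity ((al ^ 2 + be ^ 2) * (x ^ 2 + y ^ 2) + z ^ 2);
      [rewrite Hunit|]; ring. }
  pose proof (allowed_three k j c Hkj Hkc Hjc x y z ltac:(lra)) as Hx.
  pose proof (A3_pair p _ _ k j p_A3 Hkj Hx (rot_unitary k j al be Hkj Hunit)
                (rot_mat k j al be Hkj)) as Hpair.
  rewrite rot_three in Hpair by assumption.
  destruct (p_three_G k j c x y z) as [E1 E2]; try assumption; try lra.
  destruct (p_three_G k j c (al * x + be * y) (- be * x + al * y) z) as [E3 E4];
    try assumption; try lra.
  rewrite E1, E2, E3, E4, <- HN, <- HN' in Hpair. exact Hpair.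
Qed.

(* the quarter-turn rotation: G does not depend on the world index *)
Lemma G_index_independent k j N s : 0 < N -> 0 <= s <= N -> k <> j -> G p k N s = G p j N s.
Proof.
  intros HN Hs Hkj.
  pose proof (G_rotation k j N (sqrt s) 0 (sqrt (N - s)) 0 1 Hkj) as E.
  replace ((0 * sqrt s + 1 * 0) ^ 2) with 0 in E by ring.
  replace (0 ^ 2) with 0 in E by ring.
  replace ((- (1) * sqrt s + 0 * 0) ^ 2) with (sqrt s ^ 2) in E by ring.
  rewrite !pow2_sqrt in E by lra.
  rewrite !G_zero in E by lra. specialize (E ltac:(ring) ltac:(ring) HN). lra.
Qed.

(* the rotation taking (sqrt a, sqrt b) to (sqrt (a + b), 0): G is additive *)
Lemma G_additive n N a b : 0 < N -> 0 <= a -> 0 <= b -> a + b <= N ->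
  G p n N (a + b) = G p n N a + G p n N b.
Proof.
  intros HN Ha Hb Hab.
  destruct (Req_dec (a + b) 0) as [H0|H0].
  { replace a with 0 by lra. replace b with 0 by lra. rewrite Rplus_0_r, G_zero by exact HN. ring. }
  set (s := sqrt (a + b)).
  assert (Hs2 : s ^ 2 = a + b) by (apply pow2_sqrt; lra).
  assert (Hs : s <> 0) by (intro E; rewrite E in Hs2; lra).
  pose proof (pow2_sqrt a Ha) as Ha2. pose proof (pow2_sqrt b Hb) as Hb2.
  pose proof (G_rotation n (S n) N (sqrt a) (sqrt b) (sqrt (N - a - b))
                (sqrt a / s) (sqrt b / s) (Nat.neq_succ_diag_r n)) as E.
  assert (Hrotated : sqrt a / s * sqrt a + sqrt b / s * sqrt b = s).
  { transitivity ((sqrt a ^ 2 + sqrt b ^ 2) / s); [field; exact Hs|].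
    rewrite Ha2, Hb2, <- Hs2. field. exact Hs. }
  rewrite Hrotated, Hs2 in E.
  replace ((- (sqrt b / s) * sqrt a + sqrt a / s * sqrt b) ^ 2) with 0 in E by (field; exact Hs).
  rewrite Ha2, Hb2, (G_zero (S n)), (G_index_independent (S n) n) in E by (lra || lia).
  rewrite Rplus_0_r in E. symmetry. apply E; [|rewrite pow2_sqrt by lra; lra|exact HN].
  transitivity ((sqrt a ^ 2 + sqrt b ^ 2) / s ^ 2); [field; exact Hs|].
  rewrite Ha2, Hb2, Hs2. field. exact H0.
Qed.

End RuleOnTwoLevelStates.

Lemma Rabs_le_all_inv_nat (x : R) : (forall q : nat, (0 < q)%nat -> Rabs x <= / INR q) -> x = 0.
Proof.
  intro Hx. destruct (Req_dec x 0) as [|Hneq]; [assumption|exfalso].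
  destruct (archimed_cor1 (Rabs x) (Rabs_pos_lt x Hneq)) as (q & Hq & Hq0).
  specialize (Hx q Hq0). lra.
Qed.

Section AdditiveOnInterval.
Variables (h : R -> R) (N : R).
Hypothesis N_pos : 0 < N.
Hypothesis h_nonneg : forall a, 0 <= a <= N -> 0 <= h a.
Hypothesis h_N : h N = 1.
Hypothesis h_additive : forall a b, 0 <= a -> 0 <= b -> a + b <= N -> h (a + b) = h a + h b.

Lemma additive_zero : h 0 = 0.
Proof.
  pose proof (h_additive 0 0) as E. rewrite Rplus_0_r in E.
  specialize (E ltac:(lra) ltac:(lra) ltac:(lra)). lra.
Qed.

Lemma additive_monotone a b : 0 <= a -> a <= b -> b <= N -> h a <= h b.
Proof.
  intros Ha Hab HbN. replace b with (a + (b - a)) by ring.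
  rewrite h_additive by lra. pose proof (h_nonneg (b - a) ltac:(lra)). lra.
Qed.

Lemma additive_multiple (d : R) (k : nat) : 0 <= d -> INR k * d <= N -> h (INR k * d) = INR k * h d.
Proof.
  intro Hd. induction k as [|k IHk]; intro Hk.
  - simpl. rewrite Rmult_0_l, additive_zero. ring.
  - rewrite S_INR in Hk |- *. pose proof (pos_INR k).
    replace ((INR k + 1) * d) with (INR k * d + d) by ring.
    rewrite h_additive, IHk by nra. ring.
Qed.

Lemma additive_unit_fraction q : (0 < q)%nat -> h (N / INR q) = / INR q.
Proof.
  intro Hq. assert (Hq' : 0 < INR q) by (apply lt_0_INR; exact Hq).
  pose proof (additive_multiple (N / INR q) q) as E.
  replace (INR q * (N / INR q)) with N in E by (field; lra).
  rewrite h_N in E. specialize (E ltac:(apply Rdiv_le_0_compat; lra) ltac:(lra)).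
  apply (Rmult_eq_reg_l (INR q)); [|lra]. rewrite <- E. field. lra.
Qed.

(* h a and a / N lie in the same interval [k/q, (k+1)/q] *)
Lemma additive_approx a q : 0 <= a <= N -> (0 < q)%nat -> Rabs (h a - a / N) <= / INR q.
Proof.
  intros [Ha HaN] Hq. assert (Hq' : 0 < INR q) by (apply lt_0_INR; exact Hq).
  destruct (Req_dec a N) as [->|Ha_lt].
  { rewrite h_N. replace (1 - N / N) with 0 by (field; lra). rewrite Rabs_R0.
    left. apply Rinv_0_lt_compat, Hq'. }
  set (d := N / INR q). assert (Hd : 0 < d) by (apply Rdiv_lt_0_compat; lra).
  destruct (nfloor_ex (a / d)) as [k [Hk_le Hk_lt]]; [apply Rdiv_le_0_compat; lra|].
  assert (Hkd : INR k * d <= a).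
  { replace a with (a / d * d) by (field; lra). apply Rmult_le_compat_r; lra. }
  assert (Hk1d : a < (INR k + 1) * d).
  { replace a with (a / d * d) at 1 by (field; lra). apply Rmult_lt_compat_r; lra. }
  assert (Hkq : (k < q)%nat).
  { apply INR_lt. apply (Rmult_lt_reg_r d); [exact Hd|]. unfold d at 2.
    replace (INR q * (N / INR q)) with N by (field; lra). lra. }
  assert (Hk1q : INR k + 1 <= INR q) by (rewrite <- S_INR; apply le_INR; lia).
  assert (Hk1N : (INR k + 1) * d <= N).
  { replace N with (INR q * d) by (unfold d; field; lra). apply Rmult_le_compat_r; lra. }
  pose proof (pos_INR k).
  assert (Hlow : INR k / INR q <= h a).
  { unfold Rdiv. rewrite <- (additive_unit_fraction q Hq). fold d.
    rewrite <- additive_multiple by nra.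
    apply additive_monotone; nra. }
  assert (Hhigh : h a <= (INR k + 1) / INR q).
  { unfold Rdiv. rewrite <- (additive_unit_fraction q Hq). fold d.
    rewrite <- S_INR, <- additive_multiple.
    - rewrite S_INR. apply additive_monotone; lra.
    - lra.
    - rewrite S_INR. lra. }
  assert (Hratio : INR k / INR q <= a / N < (INR k + 1) / INR q).
  { unfold d in Hkd, Hk1d. split.
    - apply (Rmult_le_reg_r N); [exact N_pos|].
      replace (INR k / INR q * N) with (INR k * (N / INR q)) by (field; lra).
      replace (a / N * N) with a by (field; lra). exact Hkd.
    - apply (Rmult_lt_reg_r N); [exact N_pos|].
      replace ((INR k + 1) / INR q * N) with ((INR k + 1) * (N / INR q)) by (field; lra).
      replace (a / N * N) with a by (field; lra). exact Hk1d. }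
  replace (/ INR q) with ((INR k + 1) / INR q - INR k / INR q) by (field; lra).
  apply Rabs_le. lra.
Qed.

Lemma additive_linear a : 0 <= a <= N -> h a = a / N.
Proof.
  intro Ha. apply Rminus_diag_uniq, Rabs_le_all_inv_nat. intros q Hq.
  exact (additive_approx a q Ha Hq).
Qed.

End AdditiveOnInterval.

Theorem theorem3 (p : vec -> nat -> R) :
  prob_rule p -> axiom_A2 p -> axiom_A3 p ->
  forall v : vec, allowed v ->
  forall n : nat, p v n = sqn v n / Series (sqn v).
Proof.
  intros Hrule HA2 HA3 v Hv n. pose proof Hv as [Hl2 HN].
  rewrite (reduction_to_G p v n HA3 Hv).
  apply (additive_linear (G p n (Series (sqn v)))).
  - exact HN.
  - intros a Ha. exact (G_nonneg p Hrule n _ a HN Ha).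
  - exact (G_full p Hrule HA2 n _ HN).
  - intros a b Ha Hb Hab. exact (G_additive p HA2 HA3 n _ a b HN Ha Hb Hab).
  - split; [apply sqn_nonneg|]. apply (term_le_Series (sqn v)); [apply sqn_nonneg|exact Hl2].
Qed.
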